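(* Let $\mu$ be a positive finite Borel measure on $\mathbb{R}^d$ and $0<\beta\le d$, and assume there exist $\varphi\in L^2(\mu)$ with $\|\varphi\|_{L^2(\mu)}>0$ and a constant $C>0$ such that $|(\varphi\mu)^\wedge(t)|\le C|t|^{-\beta/2}$ for all $t\in\mathbb{R}^d$. Let $\Lambda\subset\mathbb{R}^d$ be countable such that $E(\Lambda)$ is a Fourier frame for $L^2(\mu)$. If $\alpha$ is a real number for which there is a constant $C'$ with $\#\big(\Lambda\cap B(0,r)\big)\le C' r^\alpha$ for all $r\ge1$, then $$\alpha\ge\Big(\frac1\beta+\frac1d\Big)^{-1}.$$
   Context: For a finite complex measure $\nu$ on $\mathbb{R}^d$, $\widehat{\nu}(t)=\int e^{-2\pi i\langle t,x\rangle}d\nu(x)$; $\varphi\mu$ denotes the complex measure with density $\varphi$ with respect to $\mu$. For $\lambda\in\mathbb{R}^d$, $e_\lambda(x)=e^{2\pi i\langle\lambda,x\rangle}$, $E(\Lambda)=\{e_\lambda\}_{\lambda\in\Lambda}$. $E(\Lambda)$ is a Fourier frame for $L^2(\mu)$ if there are $0<A,B<\infty$ with $A\|f\|^2_{L^2(\mu)}\le\sum_{\lambda\in\Lambda}|\langle f,e_\lambda\rangle_{L^2(\mu)}|^2\le B\|f\|^2_{L^2(\mu)}$ for all $f\in L^2(\mu)$. $B(x,r)$ is the open ball of radius $r$ centered at $x$. *)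

From HB Require Import structures.
From mathcomp Require Import all_boot all_order all_algebra.
From mathcomp Require Import all_classical all_reals all_analysis.
Set Implicit Arguments. Unset Strict Implicit. Unset Printing Implicit Defensive.
Import Order.TTheory GRing.Theory Num.Theory.
Import numFieldNormedType.Exports.
Local Open Scope classical_set_scope.
Local Open Scope ring_scope.

(* R^d as row vectors, with its Borel sigma-algebra (generated by the open
   sets of the product topology, which is the Euclidean topology). *)
Definition Rd (R : realType) (d : nat) := g_sigma_algebraType (@open 'rV[R]_d).

Definition dotp (R : realType) (d : nat) (x y : 'rV[R]_d) : R :=
  \sum_(i < d) x ord0 i * y ord0 i.
Definition enorm (R : realType) (d : nat) (x : 'rV[R]_d) : R :=
  Num.sqrt (dotp x x).
Definition eball0 (R : realType) (d : nat) (r : R) : set 'rV[R]_d :=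
  [set x | enorm x < r].

(* Complex numbers as pairs (real part, imaginary part). *)
Definition cmul (R : realType) (z w : R * R) : R * R :=
  (z.1 * w.1 - z.2 * w.2, z.1 * w.2 + z.2 * w.1).
Definition cconj (R : realType) (z : R * R) : R * R := (z.1, - z.2).
Definition cabs2 (R : realType) (z : R * R) : R := z.1 ^+ 2 + z.2 ^+ 2.
Definition cabs (R : realType) (z : R * R) : R := Num.sqrt (cabs2 z).

Definition cintegral (R : realType) (d : nat)
    (mu : {measure set (Rd R d) -> \bar R}) (f : Rd R d -> R * R) : R * R :=
  (Rintegral mu setT (fun x => (f x).1), Rintegral mu setT (fun x => (f x).2)).

Definition in_L2 (R : realType) (d : nat)
    (mu : {measure set (Rd R d) -> \bar R}) (f : Rd R d -> R * R) : Prop :=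
  [/\ measurable_fun setT (fun x => (f x).1),
      measurable_fun setT (fun x => (f x).2) &
      (\int[mu]_x (cabs2 (f x))%:E < +oo)%E].

Definition L2norm2 (R : realType) (d : nat)
    (mu : {measure set (Rd R d) -> \bar R}) (f : Rd R d -> R * R) : \bar R :=
  (\int[mu]_x (cabs2 (f x))%:E)%E.

Definition L2inner (R : realType) (d : nat)
    (mu : {measure set (Rd R d) -> \bar R}) (f g : Rd R d -> R * R) : R * R :=
  cintegral mu (fun x => cmul (f x) (cconj (g x))).

Definition expo (R : realType) (d : nat) (lam : 'rV[R]_d) : Rd R d -> R * R :=
  fun x => (cos (2 * pi * dotp lam x), sin (2 * pi * dotp lam x)).

Definition fourier_meas (R : realType) (d : nat)
    (mu : {measure set (Rd R d) -> \bar R}) (phi : Rd R d -> R * R)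
    (t : 'rV[R]_d) : R * R :=
  cintegral mu (fun x =>
    cmul (cos (- (2 * pi * dotp t x)), sin (- (2 * pi * dotp t x))) (phi x)).

Definition fourier_frame (R : realType) (d : nat)
    (mu : {measure set (Rd R d) -> \bar R}) (Lam : set 'rV[R]_d) : Prop :=
  exists A B : R, [/\ 0 < A, 0 < B &
    forall f : Rd R d -> R * R, in_L2 mu f ->
      (A%:E * L2norm2 mu f
         <= \esum_(lam in Lam) (cabs2 (L2inner mu f (expo lam)))%:E)%E /\
      (\esum_(lam in Lam) (cabs2 (L2inner mu f (expo lam)))%:E
         <= B%:E * L2norm2 mu f)%E].

Definition count_in (R : realType) (d : nat) (S : set 'rV[R]_d) : \bar R :=
  (\esum_(x in S) 1)%E.

From HB Require Import structures.
From mathcomp Require Import all_boot all_order all_algebra.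
From mathcomp Require Import all_classical all_reals all_analysis.
From mathcomp Require Import lra ring.
Import Order.TTheory GRing.Theory Num.Theory.
Import numFieldNormedType.Exports.
Set Implicit Arguments. Unset Strict Implicit. Unset Printing Implicit Defensive.
Local Open Scope classical_set_scope.
Local Open Scope ring_scope.

(* Applying the lower frame bound to [phi e_t] gives, for every shift [t],
   [A ||phi||^2 <= \sum_(lam in Lam) |(phi mu)^(lam - t)|^2].  Suppose [Lam]
   has at most [C' r^alpha] points in balls of radius [r] with
   [alpha (beta + d) < beta d].  Take [K^d] grid points with spacing
   [2 rho], [rho = K^theta]: for [K] large [Lam] has fewer than [K^d] points
   in a cube containing the grid, so some grid point [t] is at distance at
   least [rho] from [Lam].  Cutting [Lam - t] into dyadic shells and using
   the decay [|(phi mu)^(s)|^2 <= C^2 |s|^-beta], the sum is bounded by a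
   negative power of [K], which contradicts the frame bound.  A suitable
   [theta] exists precisely because [alpha (beta + d) < beta d]. *)

Section euclidean.
Variables (R : realType) (d : nat).
Implicit Types (x y t : 'rV[R]_d) (r : R).

Definition cube r : set 'rV[R]_d := [set x | forall i, `|x ord0 i| < r].

Lemma dotp_ge0 x : 0 <= dotp x x.
Proof. by apply: sumr_ge0 => i _; rewrite -expr2 sqr_ge0. Qed.

Lemma dotpBl x y t : dotp (x - y) t = dotp x t - dotp y t.
Proof. by rewrite /dotp -sumrB; apply: eq_bigr => i _; rewrite !mxE mulrBl. Qed.

Lemma enorm0 : enorm (0 : 'rV[R]_d) = 0.
Proof. by rewrite /enorm /dotp big1 ?sqrtr0 // => i _; rewrite mxE mul0r. Qed.

Lemma normr_coord_le_enorm x i : `|x ord0 i| <= enorm x.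
Proof.
rewrite /enorm -sqrtr_sqr ler_sqrt ?dotp_ge0 // /dotp (bigD1 i) //= expr2.
by rewrite lerDl; apply: sumr_ge0 => j _; rewrite -expr2 sqr_ge0.
Qed.

Lemma cube_sub_eball0 r : (0 < d)%N -> 0 < r -> cube r `<=` eball0 (d%:R * r).
Proof.
move=> d_gt0 r_gt0 x cube_x.
have dotp_lt : dotp x x < d%:R * r ^+ 2.
  have -> : d%:R * r ^+ 2 = \sum_(i < d) r ^+ 2.
    by rewrite sumr_const card_ord mulr_natl.
  apply: ltr_sum.
    by apply/hasP; exists (Ordinal d_gt0); rewrite ?mem_index_enum.
  move=> i _; rewrite -expr2 -real_normK ?num_real //.
  by rewrite ltrXn2r ?normr_ge0 ?(ltW r_gt0) ?cube_x.
have dr_gt0 : 0 < d%:R * r by rewrite mulr_gt0 ?ltr0n.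
rewrite /eball0 /= /enorm -(gtr0_norm dr_gt0) -sqrtr_sqr ltr_sqrt ?exprn_gt0 //.
apply: (lt_le_trans dotp_lt); rewrite exprMn ler_wpM2r ?exprn_ge0 ?(ltW r_gt0) //.
by rewrite expr2 ler_peMr ?ler0n // ler1n.
Qed.

End euclidean.
Arguments cube {R d}.

Section counting.
Variables (R : realType) (d : nat).
Implicit Types (S X : set 'rV[R]_d).

Lemma fsbig1_le_count_in S X : finite_set X -> X `<=` S ->
  (\sum_(x \in X) (1 : \bar R) <= count_in S)%E.
Proof. by move=> finX XS; apply: esum_ge; exists X. Qed.

Lemma le_count_in S X : X `<=` S -> (count_in X <= count_in S)%E.
Proof.
move=> XS; apply: ge_ereal_sup => /= _ [Y [finY YX]] <-.
by apply: fsbig1_le_count_in => //; apply: subset_trans XS.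
Qed.

Lemma esum_le_layers (Lam : set 'rV[R]_d) (g : 'rV[R]_d -> R)
    (layer : 'rV[R]_d -> nat) (B : nat -> set 'rV[R]_d) (c N : nat -> R) (S : R) :
  (forall k, 0 <= c k) ->
  (forall x, Lam x -> [/\ B (layer x) x, 0 <= g x & g x <= c (layer x)]) ->
  (forall k, (count_in (Lam `&` B k) <= (N k)%:E)%E) ->
  (forall n, \sum_(k < n) c k * N k <= S) ->
  (\esum_(x in Lam) (g x)%:E <= S%:E)%E.
Proof.
move=> c_ge0 layerP countN sumS.
apply: ge_ereal_sup => /= _ [X [finX XLam]] <-.
rewrite fsbig_finite //= sumEFin lee_fin.
set s := finmap.enum_fset (fset_set X).
pose ind k x : R := if x \in B k then 1 else 0.
pose n := (\max_(x <- s) layer x).+1.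
apply: (@le_trans _ _ (\sum_(x <- s) \sum_(k < n) c k * ind k x)).
  rewrite big_seq [leRHS]big_seq; apply: ler_sum => x xs.
  have Xx : X x by move: xs; rewrite in_fset_set // => /set_mem.
  have [Bx g_ge0 g_le] := layerP x (XLam x Xx).
  have layer_lt : (layer x < n)%N by rewrite ltnS; apply: leq_bigmax_seq.
  rewrite (bigD1 (Ordinal layer_lt)) //= /ind (mem_set Bx) mulr1 ler_wpDr //.
  by apply: sumr_ge0 => k _; rewrite mulr_ge0 //; case: ifP.
rewrite exchange_big /=; apply: le_trans (sumS n).
apply: ler_sum => k _; rewrite -mulr_sumr ler_wpM2l // -lee_fin.
apply: le_trans (countN k).
rewrite -sumEFin -fsbig_finite //.
under eq_fsbigr do rewrite /ind fun_if.
rewrite -fsbig_mkcondr; apply: fsbig1_le_count_in; first exact: finite_setIl.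
by move=> x [Xx Bx]; split => //; apply: XLam.
Qed.

End counting.

Section grid.
Variables (R : realType) (d : nat).

Definition grid (rho : R) (K : nat) (j : {ffun 'I_d -> 'I_K}) : 'rV[R]_d :=
  \row_i (2 * rho * (j i)%:R).

Lemma normr_grid_le (rho : R) (K : nat) (j : {ffun 'I_d -> 'I_K}) i :
  0 < rho -> `|grid rho j ord0 i| <= 2 * rho * K%:R.
Proof.
move=> rho_gt0; have rho2_gt0 : 0 < 2 * rho by rewrite mulr_gt0.
by rewrite mxE ger0_norm ?mulr_ge0 ?(ltW rho_gt0) // ler_pM2l // ler_nat ltnW.
Qed.

Lemma grid_inj (rho : R) (K : nat) (j1 j2 : {ffun 'I_d -> 'I_K}) :
  0 < rho -> (forall i, `|grid rho j1 ord0 i - grid rho j2 ord0 i| < 2 * rho) ->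
  j1 = j2.
Proof.
move=> rho_gt0 close; apply/ffunP => i; apply/val_inj/eqP; apply: contraLR (close i).
rewrite -leNgt !mxE -mulrBr normrM gtr0_norm ?mulr_gt0 // -[leLHS]mulr1.
rewrite ler_pM2l ?mulr_gt0 // neq_ltn => /orP[] lt_j; first rewrite distrC.
  by rewrite -natrB ?(ltnW lt_j) // normr_nat ler1n subn_gt0.
by rewrite -natrB ?(ltnW lt_j) // normr_nat ler1n subn_gt0.
Qed.

(* Pigeonhole: grid points are [2 rho] apart, so distinct grid points cannot
   share a point of [Lam] within [rho] of both. *)
Lemma exists_grid_point_far (Lam : set 'rV[R]_d) (rho : R) (K : nat) :
  0 < rho -> (0 < K)%N ->
  (count_in (Lam `&` cube (4 * rho * K%:R)) < (K ^ d)%:R%:E)%E ->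
  exists j : {ffun 'I_d -> 'I_K}, forall x, Lam x ->
    exists i, rho <= `|x ord0 i - grid rho j ord0 i|.
Proof.
move=> rho_gt0 K_gt0 few; apply: contrapT => no_far.
have near_j (j : {ffun 'I_d -> 'I_K}) :
    exists x, Lam x /\ forall i, `|x ord0 i - grid rho j ord0 i| < rho.
  apply: contrapT => no_near; apply: no_far; exists j => x Lx.
  apply: contrapT => not_far; apply: no_near; exists x; split => // i.
  by rewrite ltNge; apply/negP => far; apply: not_far; exists i.
have [f fP] := choice near_j.
have f_inj : injective f.
  move=> j1 j2 f12; apply: grid_inj rho_gt0 _ => i.
  have [_ /(_ i) f1] := fP j1; have [_ /(_ i) f2] := fP j2.
  move: f1 f2; rewrite -f12 !ltr_norml => /andP[? ?] /andP[? ?].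
  by apply/andP; split; lra.
have f_cube (j : {ffun 'I_d -> 'I_K}) : cube (4 * rho * K%:R) (f j).
  have [_ fj] := fP j; move=> i.
  have := normr_grid_le j i rho_gt0; have : 1 <= K%:R :> R by rewrite ler1n.
  have := fj i; rewrite !ler_norml !ltr_norml => /andP[? ?] ? /andP[? ?].
  by apply/andP; split; nra.
have : ((K ^ d)%:R%:E <= count_in (Lam `&` cube (4 * rho * K%:R)))%E.
  apply: le_trans (fsbig1_le_count_in (X := range f) _ _); last 2 first.
  - exact/finite_image/finite_finset.
  - by move=> _ [j _ <-]; split; [case: (fP j) | exact: f_cube].
  rewrite fsbig_image; last by move=> ? ? _ _; apply: f_inj.
  rewrite (fsbigE (enum {ffun 'I_d -> 'I_K})) ?enum_uniq //; last first.
    by move=> x _; rewrite mem_enum.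
  under eq_bigl do rewrite in_setT.
  rewrite sumEFin lee_fin big_enum /= sumr_const card_ffun !card_ord.
  by rewrite -[leLHS]mul1r mulr_natr.
by move=> /(lt_le_trans few); rewrite ltxx.
Qed.

End grid.

Section fourier.
Variables (R : realType) (d : nat).
Implicit Types (mu : {measure set (Rd R d) -> \bar R}) (phi : Rd R d -> R * R).

Lemma continuous_measurable_Rd (g : 'rV[R]_d -> R) : continuous g ->
  measurable_fun [set: Rd R d] (g : Rd R d -> R).
Proof.
move=> g_cont.
apply: (measurability _ (measurable_realfun.RGenOpens.measurableE R)).
move=> _ [_ [a [b ->]] <-]; apply: sub_sigma_algebra; rewrite setTI.
exact: (proj1 (continuousP g)) g_cont _ (interval_open _ _).
Qed.

Lemma measurable_dotp (t : 'rV[R]_d) :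
  measurable_fun [set: Rd R d] (fun x : Rd R d => dotp t x).
Proof.
apply: measurable_sum => i; apply: measurable_realfun.measurable_funM.
  exact: measurable_cst.
by apply: continuous_measurable_Rd; exact: coord_continuous.
Qed.

Lemma measurable_phase (h : R -> R) (t : 'rV[R]_d) : continuous h ->
  measurable_fun [set: Rd R d] (fun x : Rd R d => h (2 * pi * dotp t x)).
Proof.
move=> h_cont; apply: measurableT_comp.
  exact: measurable_realfun.continuous_measurable_fun.
apply: measurable_realfun.measurable_funM; first exact: measurable_cst.
exact: measurable_dotp.
Qed.

(* The frame coefficients of [phi e_t] are the values of [(phi mu)^] on
   [Lam - t], and [phi e_t] has the norm of [phi]. *)
Lemma frame_lower_fourier_shift mu phi (Lam : set 'rV[R]_d) (A : R) t :
  in_L2 mu phi ->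
  (forall f, in_L2 mu f ->
     (A%:E * L2norm2 mu f
        <= \esum_(lam in Lam) (cabs2 (L2inner mu f (expo lam)))%:E)%E) ->
  (A%:E * L2norm2 mu phi
     <= \esum_(lam in Lam) (cabs2 (fourier_meas mu phi (lam - t)))%:E)%E.
Proof.
move=> [phi1_meas phi2_meas phi_fin] lower.
pose f x := cmul (phi x) (expo t x).
have norm_f : L2norm2 mu f = L2norm2 mu phi.
  congr (integral _ _ _); apply: funext => x; congr EFin.
  rewrite /f /cmul /expo /cabs2 /=; set a := 2 * pi * dotp t x.
  by rewrite -[RHS]mulr1 -(cos2Dsin2 a); ring.
have f_L2 : in_L2 mu f.
  split; last by rewrite -/(L2norm2 mu f) norm_f.
  - by apply: measurable_realfun.measurable_funB;
      apply: measurable_realfun.measurable_funM => //;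
      apply: measurable_phase; first [exact: continuous_cos | exact: continuous_sin].
  - by apply: measurable_realfun.measurable_funD;
      apply: measurable_realfun.measurable_funM => //;
      apply: measurable_phase; first [exact: continuous_cos | exact: continuous_sin].
have coef_f lam : L2inner mu f (expo lam) = fourier_meas mu phi (lam - t).
  congr cintegral; apply: funext => x.
  rewrite dotpBl /f /cmul /cconj /expo /=.
  have -> : - (2 * pi * (dotp lam x - dotp t x)) =
    2 * pi * dotp t x - 2 * pi * dotp lam x by ring.
  by rewrite cosB sinB; congr (_, _); ring.
by rewrite -norm_f; under eq_esum do rewrite -coef_f; exact: lower.
Qed.

End fourier.

Section decay.
Variables (R : realType) (d : nat).

Lemma cabs2_ge0 (z : R * R) : 0 <= cabs2 z.
Proof. by rewrite addr_ge0 ?sqr_ge0. Qed.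

Lemma cabs2_decay (F : 'rV[R]_d -> R * R) (C beta : R) : 0 <= C -> 0 < beta ->
  (forall t, t != 0 -> cabs (F t) <= C * enorm t `^ (- (beta / 2))) ->
  forall s delta, 0 < delta -> delta <= enorm s ->
    cabs2 (F s) <= C ^+ 2 * delta `^ (- beta).
Proof.
move=> C_ge0 beta_gt0 decay s delta delta_gt0 delta_le.
have s_gt0 : 0 < enorm s by exact: lt_le_trans delta_le.
have s_neq0 : s != 0 by apply: contraTneq s_gt0 => ->; rewrite enorm0 ltxx.
have -> : cabs2 (F s) = cabs (F s) ^+ 2 by rewrite sqr_sqrtr ?cabs2_ge0.
apply: (@le_trans _ _ ((C * enorm s `^ (- (beta / 2))) ^+ 2)).
  by rewrite lerXn2r ?nnegrE ?sqrtr_ge0 ?mulr_ge0 ?powR_ge0 ?decay.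
rewrite exprMn ler_wpM2l ?exprn_ge0 // -powR_mulrn ?powR_ge0 // -powRrM.
rewrite mulNr -mulrA mulVf ?pnatr_eq0 // mulr1 !powRN lef_pV2 ?posrE ?powR_gt0 //.
by rewrite ge0_ler_powR ?nnegrE ?(ltW beta_gt0) ?(ltW delta_gt0) ?(ltW s_gt0).
Qed.

End decay.

Section powR_facts.
Variable R : realType.

Lemma gt0_powRD (x r s : R) : 0 < x -> x `^ (r + s) = x `^ r * x `^ s.
Proof. by move=> x_gt0; rewrite powRD // (gt_eqF x_gt0) implybT. Qed.

Lemma powRS (x a : R) : 0 < x -> x `^ (1 + a) = x * x `^ a.
Proof. by move=> x_gt0; rewrite gt0_powRD // powRr1 // ltW. Qed.

Lemma exprn_powR (a x : R) n : 0 <= a -> (a ^+ n) `^ x = (a `^ x) ^+ n.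
Proof.
by move=> a_ge0; rewrite -powR_mulrn // -powRrM mulrC powRrM powR_mulrn ?powR_ge0.
Qed.

Lemma powR_lt1 (a x : R) : 1 < a -> x < 0 -> a `^ x < 1.
Proof.
move=> a_gt1 x_lt0; rewrite /powR gt_eqF ?(lt_trans ltr01) //.
by rewrite -expR0 ltr_expR nmulr_rlt0 ?ln_gt0.
Qed.

Lemma near_mul_powR_lt (c e eps : R) : e < 0 -> 0 < eps ->
  \forall n \near \oo, c * n%:R `^ e < eps.
Proof.
move=> e_lt0 eps_gt0; set M := `|c| / eps + 1.
have M_gt0 : 0 < M by rewrite ltr_wpDl ?divr_ge0 ?normr_ge0 ?(ltW eps_gt0).
near=> n.
have n_gt0 : 0 < n%:R :> R by near: n; exact: nbhs_infty_gtr.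
have M_lt : M < n%:R `^ (- e).
  have M_root_lt : M `^ (- e)^-1 < n%:R by near: n; exact: nbhs_infty_gtr.
  have -> : M = (M `^ (- e)^-1) `^ (- e).
    by rewrite -powRrM mulVf ?powRr1 ?oppr_eq0 ?lt_eqF ?(ltW M_gt0).
  by rewrite gt0_ltr_powR ?oppr_gt0 ?nnegrE ?powR_ge0 ?(ltW n_gt0).
have ne_gt0 : 0 < n%:R `^ (- e) by exact: lt_trans M_lt.
rewrite -[e]opprK powRN -ltr_pdivlMr ?invr_gt0 // invrK.
apply: le_lt_trans (ler_norm c) _; rewrite -ltr_pdivrMl // mulrC.
by apply: lt_trans M_lt; rewrite /M ltrDl.
Unshelve. all: by end_near.
Qed.

End powR_facts.

Lemma exists_theta (R : realType) (alpha beta D : R) :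
  0 < alpha -> 0 < beta -> 0 < D -> alpha * (beta + D) < beta * D ->
  exists theta, [/\ 0 < theta, alpha * (1 + theta) < beta * theta &
                    alpha * (1 + theta) < D].
Proof.
move=> alpha_gt0 beta_gt0 D_gt0 sparse.
have alpha_lt_beta : alpha < beta by nra.
have ba_gt0 : 0 < beta - alpha by rewrite subr_gt0.
have alpha_lt_D : alpha < D.
  rewrite ltNge; apply/negP => D_le.
  by have := ler_wpM2r (ltW ba_gt0) D_le; nra.
(* any [theta] strictly between [x] and [y] works *)
pose x := alpha / (beta - alpha); pose y := (D - alpha) / alpha.
have xE : x * (beta - alpha) = alpha by rewrite divfK ?gt_eqF.
have yE : alpha * y = D - alpha by rewrite mulrC divfK ?gt_eqF.
have x_gt0 : 0 < x by rewrite divr_gt0.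
have x_lt_y : x < y.
  by rewrite -(ltr_pM2l alpha_gt0) yE -(ltr_pM2r ba_gt0) -mulrA xE; nra.
exists ((x + y) / 2); split; nra.
Qed.

Section far_sum.
Variables (R : realType) (d : nat) (G : 'rV[R]_d -> R) (C beta : R).
Hypothesis G_decay : forall s (delta : R), 0 < delta -> delta <= enorm s ->
  G s <= C ^+ 2 * delta `^ (- beta).

(* Shell [0] of a point [t] is the complement of its cube of half-side [rho];
   shell [k.+1] lies outside the cube of half-side [2 ^+ k.+1 * L], on which
   [G (. - t)] is controlled by [G_decay] at distance [2 ^+ k * L]. *)
Definition shell_radius (rho L : R) (k : nat) : R :=
  if k is m.+1 then 2 ^+ m * L else rho.

Lemma exists_shell (rho L : R) (t lam : 'rV[R]_d) : 0 < rho -> 0 < L ->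
  (forall i, `|t ord0 i| <= L) -> (exists i, rho <= `|lam ord0 i - t ord0 i|) ->
  exists k, cube (2 ^+ k.+1 * L) lam /\
    G (lam - t) <= C ^+ 2 * shell_radius rho L k `^ (- beta).
Proof.
move=> rho_gt0 L_gt0 t_le [i0 far_i0].
have [n lam_in] : exists n, cube (2 ^+ n.+1 * L) lam.
  exists (Num.Def.truncn (enorm lam / L)) => i.
  apply: le_lt_trans (normr_coord_le_enorm lam i) _.
  rewrite -ltr_pdivrMr // (lt_le_trans (truncnS_gt _)) //.
  by rewrite -natrX ler_nat ltnW // ltn_expl.
elim: n lam_in => [|n IH] lam_in.
  exists 0%N; split => //; apply: G_decay => //; apply: le_trans far_i0 _.
  by have := normr_coord_le_enorm (lam - t) i0; rewrite !mxE.
have [lam_in'|lam_out] := pselect (cube (2 ^+ n.+1 * L) lam); first exact: IH.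
exists n.+1; split => //; apply: G_decay; first by rewrite mulr_gt0 ?exprn_gt0.
have [i lam_i] : exists i, 2 ^+ n.+1 * L <= `|lam ord0 i|.
  apply: contrapT => lam_small; apply: lam_out => i.
  by rewrite ltNge; apply/negP => lam_i; apply: lam_small; exists i.
apply: le_trans (normr_coord_le_enorm (lam - t) i); rewrite !mxE.
have := ler_normD (lam ord0 i - t ord0 i) (t ord0 i); rewrite subrK.
have := t_le i; have : L <= 2 ^+ n * L.
  by rewrite ler_peMl ?(ltW L_gt0) // exprn_ege1 // ler1n.
by move: lam_i; rewrite /= exprS -mulrA; lra.
Qed.

Variables (Lam : set 'rV[R]_d) (C' alpha : R).
Hypotheses (G_ge0 : forall s, 0 <= G s) (C'_ge0 : 0 <= C').
Hypothesis count_cube : forall r, 1 <= r ->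
  (count_in (Lam `&` cube r) <= (C' * r `^ alpha)%:E)%E.

(* The shells [k.+1] contribute a geometric series of ratio
   [2 `^ (alpha - beta)]. *)
Lemma esum_far_le (rho L : R) (t : 'rV[R]_d) :
  alpha < beta -> 0 < rho -> 1 <= L ->
  (forall i, `|t ord0 i| <= L) ->
  (forall lam, Lam lam -> exists i, rho <= `|lam ord0 i - t ord0 i|) ->
  (\esum_(lam in Lam) (G (lam - t))%:E <=
    (C ^+ 2 * rho `^ (- beta) * (C' * (2 * L) `^ alpha) +
     C ^+ 2 * C' * 4 `^ alpha * L `^ (alpha - beta)
       / (1 - 2 `^ (alpha - beta)))%:E)%E.
Proof.
move=> alpha_lt_beta rho_gt0 L_ge1 t_le far.
have L_gt0 : 0 < L by exact: lt_le_trans L_ge1.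
set q := 2 `^ (alpha - beta).
have q_gt0 : 0 < q by rewrite powR_gt0.
have q_lt1 : q < 1 by rewrite powR_lt1 ?ltr1n // subr_lt0.
pose c k := C ^+ 2 * shell_radius rho L k `^ (- beta).
pose N k := C' * (2 ^+ k.+1 * L) `^ alpha.
have shell_lam lam : exists k, Lam lam ->
    cube (2 ^+ k.+1 * L) lam /\ G (lam - t) <= c k.
  have [Llam|] := pselect (Lam lam); last by exists 0%N.
  by have [k ?] := exists_shell rho_gt0 L_gt0 t_le (far lam Llam); exists k.
have c_ge0 k : 0 <= c k by rewrite mulr_ge0 ?sqr_ge0 ?powR_ge0.
have [layer layerP] := choice shell_lam.
apply: (@esum_le_layers _ _ _ _ layer (fun k => cube (2 ^+ k.+1 * L)) c N) => //.
- by move=> lam Llam; have [? ?] := layerP lam Llam; split.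
- move=> k; apply/count_cube/(le_trans L_ge1).
  by rewrite ler_peMl ?(ltW L_gt0) // exprn_ege1 // ler1n.
have N_ge0 k : 0 <= N k by rewrite mulr_ge0 ?powR_ge0.
have a_ge0 : 0 <= C ^+ 2 * C' * 4 `^ alpha * L `^ (alpha - beta).
  by rewrite mulr_ge0 ?powR_ge0 // mulr_ge0 ?powR_ge0 // mulr_ge0 ?sqr_ge0.
have tail_ge0 : 0 <= C ^+ 2 * C' * 4 `^ alpha * L `^ (alpha - beta) / (1 - q).
  by rewrite divr_ge0 ?subr_ge0 ?(ltW q_lt1).
case=> [|n].
  rewrite big_ord0.
  exact: addr_ge0 (mulr_ge0 (c_ge0 0%N) (N_ge0 0%N)) tail_ge0.
rewrite big_ord_recl lerD //.
have term k :
    c k.+1 * N k.+1 = C ^+ 2 * C' * 4 `^ alpha * L `^ (alpha - beta) * q ^+ k.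
  rewrite /c /N /=.
  have -> : 2 ^+ k.+2 * L = 2 ^+ k * (4 * L) by rewrite !exprS; ring.
  rewrite !powRM ?exprn_ge0 ?mulr_ge0 ?(ltW L_gt0) // -exprn_powR //.
  rewrite [_ - beta]addrC !gt0_powRD ?exprn_gt0 //; ring.
under eq_bigr do rewrite term.
apply: le_trans (geometric_le_lim n a_ge0 q_gt0 _); last by rewrite gtr0_norm.
by rewrite /series /= big_mkord.
Qed.

Lemma exists_far_grid_point (K : nat) (theta : R) : (0 < K)%N -> 0 < theta ->
  C' * 4 `^ alpha * K%:R `^ (alpha * (1 + theta) - d%:R) < 1 ->
  exists t : 'rV[R]_d, (forall i, `|t ord0 i| <= 2 * (K%:R `^ theta * K%:R)) /\
    forall lam, Lam lam -> exists i, K%:R `^ theta <= `|lam ord0 i - t ord0 i|.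
Proof.
move=> K_gt0 theta_gt0 few.
set x : R := K%:R; set rho := x `^ theta.
have x_ge1 : 1 <= x by rewrite ler1n.
have x_gt0 : 0 < x by exact: lt_le_trans x_ge1.
have rho_ge1 : 1 <= rho by rewrite -(powRr0 x) ler_powR // ltW.
have rho_gt0 : 0 < rho by exact: lt_le_trans rho_ge1.
have rho_x : rho * x = x `^ (1 + theta) by rewrite powRS // mulrC.
have count_lt : (count_in (Lam `&` cube (4 * rho * x)) < (K ^ d)%:R%:E)%E.
  apply: le_lt_trans (count_cube _) _; first by nra.
  rewrite lte_fin -mulrA rho_x powRM ?powR_ge0 // -powRrM mulrA.
  rewrite natrX -powR_mulrn ?(ltW x_gt0) //.
  move: few; rewrite powRB ?(gt_eqF x_gt0) ?implybT // mulrA.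
  by rewrite ltr_pdivrMr ?powR_gt0 // mul1r [_ * alpha]mulrC.
have [j far_j] := exists_grid_point_far rho_gt0 K_gt0 count_lt.
exists (grid rho j); split => [i|]; last exact: far_j.
by rewrite mulrA normr_grid_le.
Qed.

Lemma exists_shift_esum_lt (eps : R) : (0 < d)%N -> 0 < alpha -> 0 < beta ->
  alpha * (beta + d%:R) < beta * d%:R -> 0 < eps ->
  exists t, (\esum_(lam in Lam) (G (lam - t))%:E < eps%:E)%E.
Proof.
move=> d_gt0 alpha_gt0 beta_gt0 sparse eps_gt0.
have d_gt0' : 0 < d%:R :> R by rewrite ltr0n.
have [theta [theta_gt0 lt_beta lt_d]] :=
  exists_theta alpha_gt0 beta_gt0 d_gt0' sparse.
have alpha_lt_beta : alpha < beta by nra.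
set q := 2 `^ (alpha - beta).
have q_lt1 : q < 1 by rewrite powR_lt1 ?ltr1n // subr_lt0.
set a := C ^+ 2 * C' * 4 `^ alpha.
have [K [K_gt0 few small0 small1]] : exists K : nat, [/\ (0 < K)%N,
    C' * 4 `^ alpha * K%:R `^ (alpha * (1 + theta) - d%:R) < 1,
    a * K%:R `^ (theta * - beta + (1 + theta) * alpha) < eps / 2 &
    a * q / (1 - q) * K%:R `^ ((1 + theta) * (alpha - beta)) < eps / 2].
  near \oo => K; exists K; split; near: K; first exact: nbhs_infty_gt.
  - by apply: near_mul_powR_lt; lra.
  - by apply: near_mul_powR_lt; lra.
  - by apply: near_mul_powR_lt; nra.
have [t [t_le far]] := exists_far_grid_point K_gt0 theta_gt0 few.
set x : R := K%:R in t_le far small0 small1.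
have x_ge1 : 1 <= x by rewrite ler1n.
have x_gt0 : 0 < x by exact: lt_le_trans x_ge1.
have rho_ge1 : 1 <= x `^ theta by rewrite -(powRr0 x) ler_powR // ltW.
have L_ge1 : 1 <= 2 * (x `^ theta * x) by nra.
exists t; apply: le_lt_trans (esum_far_le alpha_lt_beta _ L_ge1 t_le far) _.
  exact: lt_le_trans rho_ge1.
rewrite lte_fin [eps]splitr ltrD //.
- move: small0; congr (_ < _).
  have -> : 2 * (2 * (x `^ theta * x)) = 4 * x `^ (1 + theta).
    by rewrite powRS //; ring.
  by rewrite -powRrM powRM ?powR_ge0 // -powRrM gt0_powRD // /a; ring.
- move: small1; congr (_ < _).
  have -> : 2 * (x `^ theta * x) = 2 * x `^ (1 + theta) by rewrite powRS //; ring.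
  by rewrite powRM ?powR_ge0 // -powRrM /a /q; ring.
Unshelve. all: by end_near.
Qed.

End far_sum.

Theorem lemma3p2 (R : realType) (d : nat)
    (mu : {finite_measure set (Rd R d) -> \bar R}) (beta : R) :
  0 < beta -> beta <= d%:R ->
  (exists phi : Rd R d -> R * R,
      [/\ in_L2 mu phi, (0 < L2norm2 mu phi)%E &
        exists C : R, 0 < C /\
          forall t : 'rV[R]_d, t != 0 ->
            cabs (fourier_meas mu phi t) <= C * enorm t `^ (- (beta / 2))]) ->
  forall Lam : set 'rV[R]_d, countable Lam -> fourier_frame mu Lam ->
  forall alpha : R,
    (exists C' : R, forall r : R, 1 <= r ->
        (count_in (Lam `&` eball0 r) <= (C' * r `^ alpha)%:E)%E) ->
    (beta^-1 + (d%:R)^-1)^-1 <= alpha.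
Proof.
move=> beta_gt0 beta_le_d [phi [phi_L2 phi_pos [C [C_gt0 decay]]]] Lam _.
move=> [A [B [A_gt0 _ frame]]] alpha [C' count_ball].
have d_gt0 : (0 < d)%N by rewrite -(ltr0n R); exact: lt_le_trans beta_le_d.
have D_gt0 : 0 < d%:R :> R by rewrite ltr0n.
set gam := (beta^-1 + d%:R^-1)^-1.
have gam_gt0 : 0 < gam by rewrite invr_gt0 addr_gt0 ?invr_gt0.
have gamE : gam * (beta + d%:R) = beta * d%:R.
  by rewrite /gam; field; rewrite !gt_eqF // addr_gt0.
rewrite leNgt; apply/negP => alpha_lt_gam.
(* The counting bound persists for larger exponents, and the argument needs a
   positive one. *)
pose a := Num.max alpha (gam / 2).
have a_gt0 : 0 < a by rewrite lt_max divr_gt0 ?orbT.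
have a_lt_gam : a < gam by rewrite gt_max alpha_lt_gam /=; lra.
have sparse : a * (beta + d%:R) < beta * d%:R.
  by rewrite -gamE ltr_pM2r ?addr_gt0.
have C'_ge0 : 0 <= C'.
  have := count_ball 1 (lexx _); rewrite powR1 mulr1 -lee_fin; apply: le_trans.
  by apply: esum_ge0 => x _; exact: lee01.
have count_cube r : 1 <= r ->
    (count_in (Lam `&` cube r) <= (C' * d%:R `^ a * r `^ a)%:E)%E.
  move=> r_ge1; have r_gt0 : 0 < r by exact: lt_le_trans r_ge1.
  have dr_ge1 : 1 <= d%:R * r by rewrite mulr_ege1 ?ler1n.
  have cube_sub : Lam `&` cube r `<=` Lam `&` eball0 (d%:R * r).
    by move=> x [Lx cube_x]; split => //; exact: (cube_sub_eball0 d_gt0 r_gt0 cube_x).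
  apply: le_trans (le_count_in cube_sub) _; apply: le_trans (count_ball _ dr_ge1) _.
  rewrite lee_fin -mulrA -powRM ?ler0n ?(ltW r_gt0) // ler_wpM2l //.
  by rewrite ler_powR // le_max lexx.
have norm_fin : L2norm2 mu phi \is a fin_num.
  by rewrite ge0_fin_numE ?(ltW phi_pos); case: phi_L2.
pose P := fine (L2norm2 mu phi).
have normE : L2norm2 mu phi = P%:E by rewrite fineK.
have P_gt0 : 0 < P by rewrite -lte_fin -normE.
have [t small] := exists_shift_esum_lt
  (cabs2_decay (ltW C_gt0) beta_gt0 decay) (fun s => cabs2_ge0 _)
  (mulr_ge0 C'_ge0 (powR_ge0 _ _)) count_cube d_gt0 a_gt0 beta_gt0 sparse
  (mulr_gt0 A_gt0 P_gt0).
have := frame_lower_fourier_shift t phi_L2 (fun f f_L2 => (frame f f_L2).1).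
by rewrite normE -EFinM => /(lt_le_trans small); rewrite ltxx.
Qed.
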